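(* Let $T$ be a nonempty rooted tree, $G=U(T)$ its underlying graph, and $U\colon X^T\to X^G$ the simplicial map sending $(F;L_0\supseteq\cdots\supseteq L_n)$ to $(U(F);L_0\setminus L_1,\dots,L_{n-1}\setminus L_n)$. Then: (1) if $T$ is labelled, $U$ is CULF if and only if $T$ has exactly one vertex; (2) if $T$ is unlabelled (planar or non-planar), $U$ is CULF if and only if $T$ has at most one edge.
   Context: Rooted trees and $X^T$: A rooted tree $T$ is a finite tree with a distinguished root vertex; its vertex set is partially ordered by $v\le w$ iff $v$ lies on the path from the root to $w$; a planar rooted tree additionally carries a total order on the upward edges at each vertex. A rooted forest is a disjoint union of rooted trees. For a vertex subset $S$, the subforest spanned by $S$ ($H|_S$) has vertex set $S$, the edges with both endpoints in $S$, and the induced structure. A subset $L$ defines a lower subforest if $w\in L$, $v\le w$ imply $v\in L$. For $n\ge1$ a layering of $n-1$ cuts of a forest $F$ is a chain $V(F)=L_0\supseteq\cdots\supseteq L_n=\varnothing$ of subsets each defining a lower subforest. An admissible subforest of $T$ is the subforest spanned by $L_i\setminus L_j$ ($i\le j$) for a layering of $T$. $X^T_0$ is a point; $X^T_n$ ($n\ge1$) is the set of pairs $(H;L_0\supseteq\cdots\supseteq L_n)$ with $H$ admissible and $L_\bullet$ a layering of $H$; for $n\ge2$, $d_0(H;L_\bullet)=(H|_{L_1};L_1\supseteq\cdots\supseteq L_n)$, $d_n(H;L_\bullet)=(H|_{L_0\setminus L_{n-1}};L_0\setminus L_{n-1}\supseteq\cdots\supseteq L_{n-1}\setminus L_{n-1})$,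 $d_i$ ($0<i<n$) deletes $L_i$, and $s_i$ repeats $L_i$. In the labelled version vertices are distinguishable; in the unlabelled versions one takes isomorphism classes of such pairs under isomorphisms of rooted forests (planar-structure preserving in the planar case) carrying each $L_i$ onto $L'_i$. Graphs and $X^G$: For a finite graph $G$, a subgraph is a vertex subset with a set of edges having endpoints in it. $X^G_0=\{\varnothing\}$; $X^G_1$ is the set of subgraphs of $G$; $X^G_n$ ($n\ge1$) is the set of tuples $(H;S_1,\dots,S_n)$ with $H$ a subgraph and $S_1,\dots,S_n$ a partition of $V(H)$ into possibly empty disjoint sets; $d_0$ and $d_n$ delete $S_1$, resp. $S_n$, together with these vertices and incident edges from $H$; $d_i$ ($1\le i\le n-1$) merges $S_i$ and $S_{i+1}$; $s_i$ inserts $\varnothing$ after $S_i$. For unlabelled $G$ one takes isomorphism classes of tuples under graph isomorphisms preserving the parts. A map of simplicial sets $f\colon X\to Y$ is CULF (conservative with unique lifting of factorizations) if for all $n$ the commutative squares formed by $f_n,f_{n+1}$ and the degeneracies $s_j\colon X_n\to X_{n+1}$, $s_j\colon Y_n\to Y_{n+1}$ ($0\le j\le n$), and those formed by $f_n,f_{n-1}$ and the inner faces $d_i$ ($0<i<n$), are pullbacks of sets. *)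

From mathcomp Require Import all_boot.
Set Implicit Arguments. Unset Strict Implicit. Unset Printing Implicit Defensive.

Section Trees.
Variable V : finType.
(* A rooted tree on vertex set V is given by its parent function:
   par v = Some p iff p is the parent of v; par r = None iff r is the root. *)
Variable par : V -> option V.

Definition is_rooted_tree : Prop :=
  (exists! r : V, par r = None) /\
  (forall v : V, exists k, iter k (fun o => obind par o) (Some v) = None).

(* Number of edges of T (edges correspond to non-root vertices, edge {v, par v}). *)
Definition nedges : nat := #|[set v : V | par v != None]|.

(* The rooted forest H = T|_S spanned by S: parent inside H (a vertex whose
   T-parent is not in S becomes a root of H). *)
Definition parH (S : {set V}) (v : V) : option V :=
  match par v with Some p => if p \in S then Some p else None | None => None end.

Definition leH (S : {set V}) (v w : V) : Prop :=
  exists k, iter k (fun o => obind (parH S) o) (Some w) = Some v.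

Definition lowerH (S L : {set V}) : Prop :=
  forall v w, w \in L -> leH S v w -> v \in L.

(* a layering L_0 ⊇ ... ⊇ L_n (n = size L - 1 >= 1) of the forest T|_S *)
Definition layering (S : {set V}) (L : seq {set V}) : Prop :=
  [/\ 2 <= size L, nth set0 L 0 = S, nth set0 L (size L).-1 = set0,
      (forall i, i.+1 < size L -> nth set0 L i.+1 \subset nth set0 L i) &
      (forall i, i < size L -> lowerH S (nth set0 L i))].

(* admissible subforests (identified with their vertex sets) *)
Definition admissible (S : {set V}) : Prop :=
  exists L, layering setT L /\
    exists i j, [/\ i <= j, j < size L & S = nth set0 L i :\: nth set0 L j].

Record ssetP (A : Type) := SSetP {
  scell : nat -> A -> Prop;            (* x is a representative of an n-simplex *)
  seqv  : nat -> A -> A -> Prop;       (* two representatives give the same n-simplex *)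
  sface : nat -> nat -> A -> A;        (* sface n i : X_n -> X_{n-1} *)
  sdeg  : nat -> nat -> A -> A }.      (* sdeg n j : X_n -> X_{n+1} *)

(* CULF: degeneracy squares and inner-face squares are pullbacks of sets
   (of equivalence classes). *)
Definition CULF (A B : Type) (X : ssetP A) (Y : ssetP B) (f : A -> B) : Prop :=
  (forall n j, j <= n -> forall x' y, scell X n.+1 x' -> scell Y n y ->
     seqv Y n.+1 (f x') (sdeg Y n j y) ->
     exists x, [/\ scell X n x, seqv X n.+1 (sdeg X n j x) x', seqv Y n (f x) y &
       forall z, scell X n z -> seqv X n.+1 (sdeg X n j z) x' -> seqv Y n (f z) y ->
         seqv X n z x]) /\
  (forall n i, 0 < i < n -> forall x y, scell X n.-1 x -> scell Y n y ->
     seqv Y n.-1 (f x) (sface Y n i y) ->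
     exists x', [/\ scell X n x', seqv X n.-1 (sface X n i x') x, seqv Y n (f x') y &
       forall z, scell X n z -> seqv X n.-1 (sface X n i z) x -> seqv Y n (f z) y ->
         seqv X n z x']).

(* simplex representative: (vertex set of H, [:: L_0; ...; L_n]) *)
Definition Tsimp := ({set V} * seq {set V})%type.

Definition XT_cell (n : nat) (x : Tsimp) : Prop :=
  if n is 0 then x = (set0, [:: set0])
  else [/\ admissible x.1, size x.2 = n.+1 & layering x.1 x.2].

Definition XT_face (n i : nat) (x : Tsimp) : Tsimp :=
  let: (S0, L) := x in
  if i == 0 then (nth set0 L 1, behead L)
  else if i == n then
    let B := nth set0 L n.-1 in (S0 :\: B, [seq A :\: B | A <- take n L])
  else (S0, take i L ++ drop i.+1 L).

Definition XT_deg (n j : nat) (x : Tsimp) : Tsimp :=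
  let: (S0, L) := x in (S0, take j.+1 L ++ drop j L).

Definition iso_forest (x x' : Tsimp) (phi : V -> V) : Prop :=
  [/\ {in x.1 &, injective phi}, phi @: x.1 = x'.1,
      (forall v, v \in x.1 -> parH x'.1 (phi v) = omap phi (parH x.1 v)),
      size x.2 = size x'.2 &
      (forall i, phi @: nth set0 x.2 i = nth set0 x'.2 i)].

Definition planar_structure (po : V -> rel V) : Prop :=
  forall v, [/\ (forall c, par c = Some v -> ~~ po v c c),
    (forall a b c, par a = Some v -> par b = Some v -> par c = Some v ->
       po v a b -> po v b c -> po v a c) &
    (forall a b, par a = Some v -> par b = Some v -> a != b -> po v a b || po v b a)].

Definition preserves_planar (po : V -> rel V) (x : Tsimp) (phi : V -> V) : Prop :=
  forall v c1 c2, v \in x.1 -> c1 \in x.1 -> c2 \in x.1 ->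
    parH x.1 c1 = Some v -> parH x.1 c2 = Some v ->
    po v c1 c2 = po (phi v) (phi c1) (phi c2).

Definition XT_lab : ssetP Tsimp :=
  SSetP XT_cell (fun _ x y => x = y) XT_face XT_deg.
Definition XT_unl : ssetP Tsimp :=
  SSetP XT_cell (fun _ x y => exists phi, iso_forest x y phi) XT_face XT_deg.
Definition XT_pl (po : V -> rel V) : ssetP Tsimp :=
  SSetP XT_cell (fun _ x y => exists phi, iso_forest x y phi /\ preserves_planar po x phi)
    XT_face XT_deg.

(* The edges of G = U(T) are the {v, par v}; the edge {v, par v} is encoded by
   the non-root vertex v.  A simplex representative is ((W, E), [:: S_1; ...; S_n])
   with (W, E) a subgraph of G. *)
Definition Gsimp := ({set V} * {set V} * seq {set V})%type.

Definition subgraph (W E : {set V}) : Prop :=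
  forall e, e \in E -> e \in W /\ exists p, par e = Some p /\ p \in W.

Definition XG_cell (n : nat) (x : Gsimp) : Prop :=
  let: (W, E, P) := x in
  [/\ size P = n, subgraph W E,
      (forall i j, i < j -> j < n -> [disjoint nth set0 P i & nth set0 P j]) &
      W = \bigcup_(A <- P) A].

Definition cutE (A E : {set V}) : {set V} :=
  [set e in E | (e \notin A) && (if par e is Some p then p \notin A else true)].

Definition XG_face (n i : nat) (x : Gsimp) : Gsimp :=
  let: (W, E, P) := x in
  if i == 0 then let A := nth set0 P 0 in (W :\: A, cutE A E, behead P)
  else if i == n then let A := nth set0 P n.-1 in (W :\: A, cutE A E, take n.-1 P)
  else (W, E, take i.-1 P ++ (nth set0 P i.-1 :|: nth set0 P i) :: drop i.+1 P).

Definition XG_deg (n j : nat) (x : Gsimp) : Gsimp :=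
  let: (W, E, P) := x in (W, E, take j P ++ set0 :: drop j P).

Definition adjE (E : {set V}) (u v : V) : bool :=
  ((u \in E) && (par u == Some v)) || ((v \in E) && (par v == Some u)).

Definition iso_graph (x x' : Gsimp) (phi : V -> V) : Prop :=
  let: (W, E, P) := x in let: (W', E', P') := x' in
  [/\ {in W &, injective phi}, phi @: W = W',
      (forall u v, u \in W -> v \in W -> adjE E u v = adjE E' (phi u) (phi v)),
      size P = size P' &
      (forall i, phi @: nth set0 P i = nth set0 P' i)].

Definition XG_lab : ssetP Gsimp :=
  SSetP XG_cell (fun _ x y => x = y) XG_face XG_deg.
Definition XG_unl : ssetP Gsimp :=
  SSetP XG_cell (fun _ x y => exists phi, iso_graph x y phi) XG_face XG_deg.

Definition Umap (x : Tsimp) : Gsimp :=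
  let: (S0, L) := x in
  (S0, [set v in S0 | if par v is Some p then p \in S0 else false],
   [seq nth set0 L i :\: nth set0 L i.+1 | i <- iota 0 (size L).-1]).

End Trees.

(* The map U keeps of a layering L_0 ⊇ ... ⊇ L_n only its bands L_k \ L_(k+1), and a layering
   is recovered from its bands, so U is injective on simplices.  A degeneracy of X^G inserts an
   empty part, whose preimage is a repeated layer that can be deleted.  An inner face of X^G
   merges two parts, and the only candidate lift inserts the layer L_i ∪ A_i, with A_i the
   preimage of the second part; this is a layering exactly when that set is lower.  With a single
   vertex this is automatic.  For the tree with one edge r - c the only failure (c in the new
   layer but not r) is repaired by precomposing the isomorphism with the swap of r and c, and up
   to isomorphism a layering of a subforest with at most two vertices is determined by the sizes
   of its layers.  Conversely, the 2-simplex ({m} | V \ {m}) of X^G has the 1-simplex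
   (T; V ⊇ ∅) as inner face, and a lift would need the complement of a preimage of m to be
   lower, which fails when m has a child (labelled case) or two neighbours (unlabelled case);
   a tree with two vertices has the former, one with two edges the latter. *)

From mathcomp Require Import all_boot.
From mathcomp Require Import zify.
From Stdlib Require Import FunctionalExtensionality PropExtensionality.
Set Implicit Arguments. Unset Strict Implicit. Unset Printing Implicit Defensive.

Section SeqSurgery.
Variable T : Type.
Implicit Types (s : seq T) (x : T).

Definition del_nth s j := take j s ++ drop j.+1 s.
Definition ins_nth s i x := take i s ++ x :: drop i s.
Definition dup_nth s j := take j.+1 s ++ drop j s.

Lemma size_del_nth s j : j < size s -> size (del_nth s j) = (size s).-1.
Proof. by move=> hj; rewrite /del_nth size_cat size_takel ?size_drop; lia. Qed.

Lemma size_ins_nth s i x : i <= size s -> size (ins_nth s i x) = (size s).+1.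
Proof. by move=> hi; rewrite /ins_nth size_cat size_takel //= size_drop; lia. Qed.

Lemma nth_del_nth x0 s j k : j <= size s ->
  nth x0 (del_nth s j) k = nth x0 s (if k < j then k else k.+1).
Proof.
move=> hj; rewrite nth_cat size_takel //.
case: ifP => hk; first by rewrite nth_take.
by rewrite nth_drop; congr nth; lia.
Qed.

Lemma nth_take_cons_drop x0 s j x b k : j <= size s ->
  nth x0 (take j s ++ x :: drop b s) k =
  if k < j then nth x0 s k else if k == j then x else nth x0 s (b + (k - j.+1)).
Proof.
move=> hj; rewrite nth_cat size_takel //.
case: ifP => hk; first by rewrite nth_take.
case: eqP => [->|hkj]; first by rewrite subnn.
by case E: (k - j) => [|m] /=; [lia | rewrite nth_drop; congr nth; lia].
Qed.

Lemma nth_ins_nth x0 s i x k : i <= size s ->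
  nth x0 (ins_nth s i x) k = if k < i then nth x0 s k else if k == i then x else nth x0 s k.-1.
Proof.
move=> hi; rewrite nth_take_cons_drop //; case: ifP => // hk; case: ifP => // hki.
by congr nth; lia.
Qed.

Lemma nth_ins_nth_lt x0 s i x k : i <= size s -> k < i -> nth x0 (ins_nth s i x) k = nth x0 s k.
Proof. by move=> hi hk; rewrite nth_ins_nth // hk. Qed.

Lemma nth_ins_nth_eq x0 s i x : i <= size s -> nth x0 (ins_nth s i x) i = x.
Proof. by move=> hi; rewrite nth_ins_nth // ltnn eqxx. Qed.

Lemma nth_ins_nth_gt x0 s i x k : i <= size s -> i < k -> nth x0 (ins_nth s i x) k = nth x0 s k.-1.
Proof. by move=> hi hk; rewrite nth_ins_nth // ltnNge (ltnW hk) /= gtn_eqF. Qed.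

Lemma del_ins_nth s i x : i <= size s -> del_nth (ins_nth s i x) i = s.
Proof.
move=> hi; apply: (@eq_from_nth _ x) => [|k _].
  by rewrite size_del_nth size_ins_nth //; lia.
rewrite nth_del_nth ?size_ins_nth //; last by lia.
case: (ltnP k i) => hk; first by rewrite nth_ins_nth_lt.
by rewrite nth_ins_nth_gt.
Qed.

Lemma dup_del_nth x0 s j : j.+1 < size s -> nth x0 s j = nth x0 s j.+1 ->
  dup_nth (del_nth s j) j = s.
Proof.
move=> hj he; apply: (@eq_from_nth _ x0) => [|k _].
  by rewrite size_cat size_takel ?size_drop size_del_nth; lia.
rewrite nth_cat size_takel ?size_del_nth; try lia.
case: ifP => hk.
  rewrite nth_take // nth_del_nth; last by lia.
  by case: ifP => hkj //; have -> : k = j by lia.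
rewrite nth_drop nth_del_nth; last by lia.
case: ifP => hkj; first by lia.
by congr nth; lia.
Qed.

End SeqSurgery.

Section Finsets.
Variables aT rT : finType.
Implicit Types (f : aT -> rT) (S B : {set aT}).

Lemma nth_sub_bigcup (P : seq {set aT}) k : nth set0 P k \subset \bigcup_(A <- P) A.
Proof.
elim: P k => [|a P IH] [|k] /=; rewrite ?big_nil ?big_cons ?sub0set ?subsetUl //.
exact: subset_trans (IH k) (subsetUr _ _).
Qed.

Lemma setI_preim_imset f S B : {in S &, injective f} -> B \subset S ->
  S :&: f @^-1: (f @: B) = B.
Proof.
move=> hf hB; apply/setP => v; rewrite !inE.
case hv: (v \in S) => /=.
  apply/imsetP/idP => [[u hu e]|h]; last by exists v.
  by rewrite (hf v u hv (subsetP hB _ hu) e).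
by apply/esym/negbTE; apply: contraFN hv => h; apply: (subsetP hB).
Qed.

Lemma imset_setI_preim f S (B : {set rT}) : B \subset f @: S -> f @: (S :&: f @^-1: B) = B.
Proof.
move=> hB; apply/setP => v; apply/idP/idP => [/imsetP [u]|hv].
  by rewrite !inE => /andP [_ h] ->.
have /imsetP [u hu e] := subsetP hB v hv.
by apply/imsetP; exists u => //; rewrite !inE hu -e.
Qed.

End Finsets.

Section Layerings.
Variable V : finType.
Variable par : V -> option V.
Local Notation layering := (layering par).
Local Notation nth := (nth set0).
Implicit Types (S : {set V}) (L : seq {set V}).

Definition band L k := nth L k :\: nth L k.+1.
Definition bands L := [seq band L i | i <- iota 0 (size L).-1].
Definition induced_edges S := [set v in S | if par v is Some p then p \in S else false].

Lemma Umap_pair S L : Umap par (S, L) = (S, induced_edges S, bands L).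
Proof. by []. Qed.

Lemma size_bands L : size (bands L) = (size L).-1.
Proof. by rewrite size_map size_iota. Qed.

Lemma nth_bands L k : nth L (size L).-1 = set0 -> nth (bands L) k = band L k.
Proof.
move=> hl; case: (ltnP k (size L).-1) => hk.
  by rewrite (nth_map 0) ?size_iota // nth_iota.
rewrite nth_default ?size_bands // /band.
suff -> : nth L k = set0 by rewrite set0D.
case: (ltnP k (size L)) => hk2; last by rewrite nth_default.
by have -> : k = (size L).-1 by lia.
Qed.

Lemma layering_last S L : layering S L -> nth L (size L).-1 = set0.
Proof. by case. Qed.

Lemma layer_subset S L i j : layering S L -> i <= j -> nth L j \subset nth L i.
Proof.
case=> _ _ _ hc _; elim: j => [|j IH]; first by rewrite leqn0 => /eqP ->.
rewrite leq_eqVlt => /orP [/eqP -> //| hij].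
apply: subset_trans (IH hij).
case: (ltnP j.+1 (size L)) => h; first exact: hc.
by rewrite nth_default // sub0set.
Qed.

Lemma layer_sub S L k : layering S L -> nth L k \subset S.
Proof. by move=> hL; case: (hL) => _ h0 _ _ _; rewrite -h0 (layer_subset hL (leq0n k)). Qed.

Lemma band_sub S L k : layering S L -> band L k \subset S.
Proof. by move=> hL; apply: subset_trans (subsetDl _ _) (layer_sub k hL). Qed.

Lemma layer_nil S L k : layering S L -> (size L).-1 <= k -> nth L k = set0.
Proof.
by move=> hL hk; have := layer_subset hL hk; rewrite (layering_last hL) subset0 => /eqP.
Qed.

Lemma layer_lower S L k : layering S L -> lowerH par S (nth L k).
Proof.
move=> hL; case: (ltnP k (size L)) => hk; first by case: hL => _ _ _ _; apply.
by rewrite nth_default // => v w; rewrite inE.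
Qed.

Lemma layer_band_split S L k : layering S L -> nth L k = band L k :|: nth L k.+1.
Proof.
move=> hL; have /subsetP sub := layer_subset hL (leqnSn k).
apply/setP => v; rewrite !inE.
by case hv: (v \in nth L k.+1); rewrite ?(sub _ hv) ?orbT ?orbF.
Qed.

Lemma mem_layerP S L v k : layering S L ->
  reflect (exists2 m, k <= m & v \in band L m) (v \in nth L k).
Proof.
move=> hL; apply: (iffP idP) => [|[m hkm]]; last first.
  by rewrite inE => /andP [_ hv]; apply: subsetP (layer_subset hL hkm) _ hv.
move: {2}(size L - k) (leqnn (size L - k)) => d; elim: d k => [|d IH] k hk hv.
  by move: hv; rewrite (layer_nil hL) ?inE //; lia.
case hv1: (v \in nth L k.+1).
  by have [|m hm hvm] := IH k.+1 _ hv1; [lia | exists m => //; lia].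
by exists k => //; rewrite inE hv1 hv.
Qed.

Lemma layering_bands_inj S L L' : layering S L -> layering S L' -> size L = size L' ->
  bands L = bands L' -> L = L'.
Proof.
move=> hL hL' hs hb.
have hband k : band L k = band L' k.
  by rewrite -nth_bands ?(layering_last hL) // hb nth_bands ?(layering_last hL').
apply: (@eq_from_nth _ set0) => // k _.
move: {2}(size L - k) (leqnn (size L - k)) => d; elim: d k => [|d IH] k hk.
  by rewrite !(layer_nil hL, layer_nil hL') //; lia.
case: (ltnP k (size L).-1) => hk2; last by rewrite !(layer_nil hL, layer_nil hL') //; lia.
by rewrite (layer_band_split k hL) (layer_band_split k hL') hband IH //; lia.
Qed.

End Layerings.

Section Lifts.
Variable V : finType.
Variable par : V -> option V.
Local Notation layering := (layering par).
Local Notation nth := (nth set0).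
Local Notation Umap := (Umap par).
Implicit Types (S : {set V}) (L P : seq {set V}).

Lemma iso_forest_id (x : Tsimp V) : iso_forest par x x id.
Proof.
split => //; first by rewrite imset_id.
  by move=> v _; case: (parH _ _ _).
by move=> i; rewrite imset_id.
Qed.

Lemma iso_graph_id (y : Gsimp V) : iso_graph par y y id.
Proof.
case: y => [[W E] P]; split => //; first by rewrite imset_id.
by move=> i; rewrite imset_id.
Qed.

Lemma XT_cellS n S L :
  XT_cell par n.+1 (S, L) <-> [/\ admissible par S, size L = n.+2 & layering S L].
Proof. by []. Qed.

Lemma Umap_cell_inj n x z : XT_cell par n x -> XT_cell par n z -> Umap x = Umap z -> x = z.
Proof.
case: n => [|n]; first by move=> /= -> ->.
case: x => S L; case: z => S' L' /XT_cellS [_ hs hL] /XT_cellS [_ hs' hL'].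
rewrite !Umap_pair => -[eS _ hb]; subst S'.
by rewrite (layering_bands_inj hL hL') // hs hs'.
Qed.

Lemma XT_cell1_empty L : XT_cell par 1 (set0, L) -> L = [:: set0; set0].
Proof. by move/XT_cellS => [_ + [_]]; case: L => [|a [|b [|]]] //= _ -> ->. Qed.

Lemma XT_face_inner n i S L : 0 < i < n -> XT_face n i (S, L) = (S, del_nth L i).
Proof. by move=> /andP [h1 h2]; rewrite /XT_face (gtn_eqF h1) (ltn_eqF h2). Qed.

Definition merge_parts P i := take i.-1 P ++ (nth P i.-1 :|: nth P i) :: drop i.+1 P.

Lemma XG_face_inner n i (W E : {set V}) P : 0 < i < n ->
  XG_face par n i (W, E, P) = (W, E, merge_parts P i).
Proof. by move=> /andP [h1 h2]; rewrite /XG_face (gtn_eqF h1) (ltn_eqF h2). Qed.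

Lemma size_merge_parts P i : 0 < i < size P -> size (merge_parts P i) = (size P).-1.
Proof. by move=> h; rewrite /merge_parts size_cat size_takel /= ?size_drop; lia. Qed.

Lemma nth_merge_parts P i k : 0 < i <= size P -> nth (merge_parts P i) k =
  if k < i.-1 then nth P k else if k == i.-1 then nth P i.-1 :|: nth P i else nth P k.+1.
Proof.
move=> /andP [h1 h2]; rewrite /merge_parts nth_take_cons_drop; last by lia.
by case: ifP => // ha; case: ifP => // hb; congr nth; lia.
Qed.

Lemma layering_del_nth S L j : layering S L -> 2 < size L -> j.+1 < size L ->
  nth L j = nth L j.+1 -> layering S (del_nth L j).
Proof.
move=> hL hs hj he; case: (hL) => _ h0 hl hc hlow.
have hd k : nth (del_nth L j) k = nth L (if k < j then k else k.+1).
  by apply: nth_del_nth; lia.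
have hsz : size (del_nth L j) = (size L).-1 by apply: size_del_nth; lia.
split; rewrite ?hsz.
- by lia.
- by rewrite hd; case: j {hj hd hsz} he => [|j] he /=; rewrite -?he.
- by rewrite hd; case: ifP => h; [lia | apply: (layer_nil hL); lia].
- by move=> k hk; rewrite !hd; apply: (layer_subset hL); case: ifP => ?; case: ifP => ?; lia.
- by move=> k hk; rewrite hd; apply: layer_lower hL.
Qed.

Lemma bands_del_nth S L j : layering S L -> j.+1 < size L -> nth L j = nth L j.+1 ->
  bands (del_nth L j) = del_nth (bands L) j.
Proof.
move=> hL hj he.
have hd k : nth (del_nth L j) k = nth L (if k < j then k else k.+1).
  by apply: nth_del_nth; lia.
have hl' : nth (del_nth L j) (size (del_nth L j)).-1 = set0.
  by rewrite hd; apply: (layer_nil hL); rewrite size_del_nth; [case: ifP; lia | lia].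
apply: (@eq_from_nth _ set0) => [|k _].
  by rewrite size_bands !size_del_nth ?size_bands //; lia.
rewrite nth_bands // nth_del_nth ?size_bands; last by lia.
rewrite nth_bands ?(layering_last hL) // /band !hd.
by case: (ltngtP k.+1 j) => //= h; rewrite -h in he; rewrite he.
Qed.

(* X^T_0 is a point, so a lift to dimension 0 can only be the empty forest. *)
Lemma deg_lift n j S L : j <= n -> XT_cell par n.+1 (S, L) -> band L j = set0 ->
  (n = 0 -> S = set0) ->
  exists x, [/\ XT_cell par n x, XT_deg n j x = (S, L) &
    Umap x = (S, induced_edges par S, del_nth (bands L) j)].
Proof.
move=> hj hc hb hn; move/XT_cellS: (hc) => [hadm hs hL].
have he : nth L j = nth L j.+1.
  apply/eqP; rewrite eqEsubset (layer_subset hL (leqnSn _)) andbT.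
  by rewrite -setD_eq0 -/(band L j) hb.
exists (S, del_nth L j); split.
- case: n hj hc hs hn => [|n] hj hc hs hn.
    by rewrite (hn erefl) in hc *; rewrite (XT_cell1_empty hc); move: hj; rewrite leqn0 => /eqP ->.
  apply/XT_cellS; split => //; first by rewrite size_del_nth; lia.
  by apply: layering_del_nth hL _ _ he; lia.
- by rewrite /= -/(dup_nth _ _) (dup_del_nth _ he) //; lia.
- by rewrite Umap_pair (bands_del_nth hL) //; lia.
Qed.

Lemma iso_graph_del_nth S E1 Q W E P j psi : j <= size P ->
  iso_graph par (S, E1, Q) (W, E, ins_nth P j set0) psi ->
  iso_graph par (S, E1, del_nth Q j) (W, E, P) psi.
Proof.
move=> hj [h1 h2 h3 h4 h5]; have hQ : size Q = (size P).+1 by rewrite h4 size_ins_nth.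
split => //; first by rewrite size_del_nth hQ //.
have hjQ : j <= size Q by rewrite hQ; lia.
have hjP : j <= size (ins_nth P j set0) by rewrite size_ins_nth //; lia.
by move=> k; rewrite (nth_del_nth _ _ hjQ) h5 -{2}(del_ins_nth set0 hj) (nth_del_nth _ _ hjP).
Qed.

Lemma layering_ins_nth S L i (M : {set V}) : layering S L -> 0 < i < size L ->
  M \subset nth L i.-1 -> nth L i \subset M -> lowerH par S M -> layering S (ins_nth L i M).
Proof.
move=> hL /andP [hi1 hi2] hM1 hM2 hlow; case: (hL) => hs h0 hl hc hlo.
have hi := ltnW hi2.
split; rewrite ?size_ins_nth //.
- by lia.
- by rewrite nth_ins_nth_lt.
- by rewrite nth_ins_nth_gt.
- move=> k hk; case: (ltngtP k i) => h1.
  + have [h2|h2] := ltnP k.+1 i; first by rewrite !nth_ins_nth_lt //; apply: hc; lia.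
    have e : k.+1 = i by lia.
    rewrite (nth_ins_nth_lt set0 M hi h1) e nth_ins_nth_eq //.
    by have -> : k = i.-1 by lia.
  + rewrite !nth_ins_nth_gt //; last by lia.
    by case: k h1 hk => // k h1 hk /=; apply: hc; lia.
  + by rewrite h1 nth_ins_nth_eq // nth_ins_nth_gt.
- move=> k hk; case: (ltngtP k i) => h1.
  + by rewrite nth_ins_nth_lt //; apply: hlo; lia.
  + by rewrite nth_ins_nth_gt //; apply: hlo; lia.
  + by rewrite h1 nth_ins_nth_eq.
Qed.

Lemma bands_ins_nth S L i A : layering S L -> 0 < i < size L -> size A = size L ->
  bands L = merge_parts A i -> [disjoint nth A i.-1 & nth A i] ->
  bands (ins_nth L i (nth L i :|: nth A i)) = A.
Proof.
move=> hL /andP [hi1 hi2] hsA hb hdis.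
have hi := ltnW hi2; have hm : 0 < i <= size A by rewrite hsA hi1.
have hband m : band L m = nth (merge_parts A i) m.
  by rewrite -hb nth_bands ?(layering_last hL).
have hbi : band L i.-1 = nth A i.-1 :|: nth A i.
  by rewrite hband nth_merge_parts // ltnn eqxx.
have hAi : [disjoint nth A i & nth L i].
  rewrite disjoints_subset; apply: subset_trans (subsetUr (nth A i.-1) _) _.
  by rewrite -hbi /band (ltn_predK hi1) setDE subsetIr.
set M := nth L i :|: nth A i.
have hl' : nth (ins_nth L i M) (size (ins_nth L i M)).-1 = set0.
  by rewrite size_ins_nth // nth_ins_nth_gt //=; apply: (layer_nil hL); lia.
apply: (@eq_from_nth _ set0) => [|k _]; first by rewrite size_bands size_ins_nth ?hsA.
rewrite nth_bands // /band.
case: (ltngtP k i) => h1.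
- have [h2|h2] := ltnP k.+1 i.
    rewrite !(nth_ins_nth_lt set0 M hi) //; have hk : k < i.-1 by lia.
    by rewrite -/(band L k) hband nth_merge_parts // hk.
  have ek : k = i.-1 by lia.
  rewrite (nth_ins_nth_lt set0 M hi) // (_ : k.+1 = i); last by lia.
  rewrite nth_ins_nth_eq // /M -setDDl ek.
  have -> : nth L i.-1 :\: nth L i = band L i.-1 by rewrite /band (ltn_predK hi1).
  by rewrite hbi setDUl setDv setU0; apply/setDidPl.
- rewrite !(nth_ins_nth_gt set0 M hi) //; last by lia.
  have -> : k.+1.-1 = (k.-1).+1 by lia.
  rewrite -/(band L k.-1) hband nth_merge_parts // !ifF; try lia.
  by congr nth; lia.
- rewrite h1 nth_ins_nth_eq // (nth_ins_nth_gt set0 M hi) //= /M setDUl setDv set0U.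
  by apply/setDidPl.
Qed.

Definition pullback_parts S (psi : V -> V) P n := [seq S :&: psi @^-1: nth P k | k <- iota 0 n].

Lemma nth_pullback_parts S psi P n k : size P = n ->
  nth (pullback_parts S psi P n) k = S :&: psi @^-1: nth P k.
Proof.
move=> hs; case: (ltnP k n) => hk; first by rewrite (nth_map 0) ?size_iota // nth_iota.
rewrite !nth_default ?size_map ?size_iota ?hs //.
by apply/setP => v; rewrite !inE andbF.
Qed.

Lemma face_pullback n i S L W E P psi :
  0 < i < n -> XT_cell par n.-1 (S, L) -> XG_cell par n (W, E, P) ->
  iso_graph par (Umap (S, L)) (XG_face par n i (W, E, P)) psi ->
  let A := pullback_parts S psi P n in
  [/\ layering S L, size L = n, bands L = merge_parts A i,
      forall k, psi @: nth A k = nth P k & {in S &, injective psi}].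
Proof.
move=> hi hx hy; have [m em] : exists m, n = m.+2 by exists n.-2; lia.
subst n; have /XT_cellS [_ hs hL] : XT_cell par m.+1 (S, L) := hx.
case: hy => hsP _ _ hW.
rewrite XG_face_inner // Umap_pair => -[hinj himg _ _ himgk] A.
have hA k : nth A k = S :&: psi @^-1: nth P k by apply: nth_pullback_parts.
have hsA : size A = size L by rewrite size_map size_iota hs.
split => // [|k]; last by rewrite hA imset_setI_preim // himg hW nth_sub_bigcup.
apply: (@eq_from_nth _ set0) => [|k _].
  by rewrite size_bands size_merge_parts hsA // hs.
have hl := layering_last hL.
rewrite nth_bands // -(setI_preim_imset hinj (band_sub k hL)) -nth_bands //.
rewrite himgk !nth_merge_parts ?hsA ?hsP ?hs; try lia.
case: ifP => _; first by rewrite hA.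
by case: ifP => _; rewrite !hA // preimsetU setIUr.
Qed.

Lemma face_lift n i S L W E P psi :
  0 < i < n -> XT_cell par n.-1 (S, L) -> XG_cell par n (W, E, P) ->
  iso_graph par (Umap (S, L)) (XG_face par n i (W, E, P)) psi ->
  lowerH par S (nth L i :|: nth (pullback_parts S psi P n) i) ->
  exists x', [/\ XT_cell par n x', XT_face n i x' = (S, L) &
    iso_graph par (Umap x') (W, E, P) psi].
Proof.
move=> hi hx hy hiso hlow.
have [m em] : exists m, n = m.+2 by exists n.-2; lia.
subst n; have [hL hs hb himg hinj] := face_pullback hi hx hy hiso.
set A := pullback_parts S psi P m.+2 in hlow hb himg.
have /XT_cellS [hadm _ _] : XT_cell par m.+1 (S, L) := hx.
case: hy => hsP _ hdisP _; move/andP: (hi) => [hi1 hi2].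
have hA k : nth A k = S :&: psi @^-1: nth P k by apply: nth_pullback_parts.
have hsA : size A = size L by rewrite size_map size_iota hs.
have hdis : [disjoint nth A i.-1 & nth A i].
  rewrite disjoint_subset; apply/subsetP => v; rewrite !hA !inE => /andP [hv1 hv2].
  by rewrite hv1 /=; apply/negbT/(disjointFr (hdisP i.-1 i _ _)) => //; lia.
have hAi : nth A i \subset band L i.-1.
  rewrite -nth_bands ?(layering_last hL) // hb nth_merge_parts ?hsA ?hs; last by lia.
  by rewrite ltnn eqxx subsetUr.
exists (S, ins_nth L i (nth L i :|: nth A i)); split.
- apply/XT_cellS; split => //; first by rewrite size_ins_nth hs //; lia.
  apply: layering_ins_nth => //; first by rewrite hs.
  + rewrite subUset (layer_subset hL (leq_pred _)) /=.
    exact: subset_trans hAi (subsetDl _ _).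
  + exact: subsetUl.
- by rewrite XT_face_inner // del_ins_nth // hs; lia.
- rewrite Umap_pair (bands_ins_nth hL _ hsA hb hdis); last by rewrite hs.
  move: hiso; rewrite XG_face_inner // Umap_pair => -[_ himgS hadj _ _].
  by split => //; rewrite hsA hs.
Qed.

End Lifts.

Section Criteria.
Variable V : finType.
Variable par : V -> option V.
Local Notation nth := (nth set0).
Local Notation Umap := (Umap par).

Lemma iso_graph_id_parts (W E W' E' : {set V}) Q P :
  iso_graph par (W, E, Q) (W', E', P) id -> W = W' /\ Q = P.
Proof.
case=> _ hW _ hs hQ; rewrite imset_id in hW; split => //.
by apply: (@eq_from_nth _ set0) => // k _; rewrite -hQ imset_id.
Qed.

Lemma culf_lab_subsingleton : (forall v w : V, v = w) -> CULF (XT_lab par) (XG_lab par) Umap.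
Proof.
move=> hall; split.
- move=> n j hj [S L] [[W E] P] hx' hy /=.
  rewrite -/(Umap (S, L)) -/(ins_nth P j set0) Umap_pair.
  case=> eS eE eb; subst W E; case: (hy) => hsP _ _ hW.
  have /XT_cellS [_ _ /layering_last hl] := hx'.
  have hb : band L j = set0 by rewrite -nth_bands // eb nth_ins_nth_eq ?hsP.
  have hn : n = 0 -> S = set0.
    by move=> e; rewrite e in hsP; rewrite hW (size0nil hsP) big_nil.
  have [x [hx hdeg hU]] := deg_lift hj hx' hb hn.
  have eU : Umap x = (S, induced_edges par S, P) by rewrite hU eb del_ins_nth ?hsP.
  exists x; split => // z hz _ hzU; apply: (Umap_cell_inj hz hx).
  by rewrite hzU eU.
- move=> n i hi x [[W E] P] hx hy e.
  have {}e : Umap x = XG_face par n i (W, E, P) := e.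
  have hiso : iso_graph par (Umap x) (XG_face par n i (W, E, P)) id.
    by rewrite e; apply: iso_graph_id.
  case: x hx e hiso => S L hx e hiso.
  have hlow : lowerH par S (nth L i :|: nth (pullback_parts S id P n) i).
    by move=> v w hw _; rewrite (hall v w).
  have [[S' L'] [hx' hf hiso']] := face_lift hi hx hy hiso hlow.
  have ex' : Umap (S', L') = (W, E, P).
    move: hf hiso'; rewrite XT_face_inner // Umap_pair => -[-> _] /iso_graph_id_parts [<- ->].
    by move: e; rewrite XG_face_inner // Umap_pair => -[_ ->].
  exists (S', L'); split => // z hz _ hzU; apply: (Umap_cell_inj hz hx').
  by rewrite hzU ex'.
Qed.

Definition Umap_reflects_iso := forall n z x y a b, XT_cell par n z -> XT_cell par n x ->
  iso_graph par (Umap z) y a -> iso_graph par (Umap x) y b -> exists phi, iso_forest par z x phi.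

Definition inner_faces_lift := forall n i x y psi,
  0 < i < n -> XT_cell par n.-1 x -> XG_cell par n y ->
  iso_graph par (Umap x) (XG_face par n i y) psi ->
  exists x', [/\ XT_cell par n x', (exists phi, iso_forest par (XT_face n i x') x phi) &
    (exists a, iso_graph par (Umap x') y a)].

Lemma culf_unl : Umap_reflects_iso -> inner_faces_lift -> CULF (XT_unl par) (XG_unl par) Umap.
Proof.
move=> hrefl hlift; split.
- move=> n j hj [S L] [[W E] P] hx' hy [psi hiso].
  have {}hiso : iso_graph par (Umap (S, L)) (W, E, ins_nth P j set0) psi := hiso.
  rewrite Umap_pair in hiso; have [_ himg _ _ himgk] := hiso.
  case: (hy) => hsP _ _ hW.
  have /XT_cellS [_ _ /layering_last hl] := hx'.
  have hb : band L j = set0.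
    apply/eqP; rewrite -nth_bands // -(imset_eq0 psi) himgk.
    by rewrite nth_ins_nth_eq ?hsP.
  have hn : n = 0 -> S = set0.
    move=> e; rewrite e in hsP; apply/eqP.
    by rewrite -(imset_eq0 psi) himg hW (size0nil hsP) big_nil.
  have [x [hx hdeg hU]] := deg_lift hj hx' hb hn.
  have hisox : iso_graph par (Umap x) (W, E, P) psi.
    by rewrite hU; apply: iso_graph_del_nth; rewrite ?hsP.
  exists x; split => //; first by exists id; rewrite [sdeg _ _ _ _]hdeg; apply: iso_forest_id.
    by exists psi.
  by move=> z hz _ [a ha]; apply: hrefl hz hx ha hisox.
- move=> n i hi x y hx hy [psi hiso].
  have [x' [hx' hf [a ha]]] := hlift _ _ _ _ _ hi hx hy hiso.
  exists x'; split => //; first by exists a.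
  by move=> z hz _ [b hb]; apply: hrefl hz hx' hb ha.
Qed.

End Criteria.

Section TreeShape.
Variable V : finType.
Variable par : V -> option V.
Hypothesis Htree : is_rooted_tree par.
Local Notation adj := (adjE par (induced_edges par setT)).

Lemma rooted_tree_root : exists r, par r = None /\ forall v, par v = None -> v = r.
Proof. by case: Htree => [[r [hr hu]] _]; exists r; split => // v hv; apply/esym/hu. Qed.

Lemma par_no_2cycle v p : par v = Some p -> par p = Some v -> False.
Proof.
move=> h1 h2; case: Htree => _ /(_ v) [k].
suff : iter k (fun o => obind par o) (Some v) \in [:: Some v; Some p].
  by rewrite !inE => /orP [] /eqP ->.
elim: k => [|k IH] /=; first by rewrite inE eqxx.
by move: IH; rewrite !inE => /orP [] /eqP -> /=; rewrite ?h1 ?h2 eqxx ?orbT.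
Qed.

Lemma par_neq_self v : par v <> Some v.
Proof. by move=> h; apply: (par_no_2cycle h h). Qed.

Lemma adj_child u w : par u = Some w -> adj w u.
Proof. by move=> h; apply/orP; right; rewrite !inE h /= ?inE eqxx. Qed.

Lemma adj_parent u w : par u = Some w -> adj u w.
Proof. by move=> h; apply/orP; left; rewrite !inE h /= ?inE eqxx. Qed.

Lemma adj_irr m : adj m m = false.
Proof.
rewrite /adjE; case e: (par m == Some m); last by rewrite !andbF.
by move/eqP: e => /par_neq_self.
Qed.

Lemma tree_card_neq1 : #|V| != 1 -> exists c p, par c = Some p.
Proof.
move=> hV; have [r [hr hu]] := rooted_tree_root.
case: (boolP [exists v, v != r]) => [/existsP [v hv]|/existsPn hno].
  case e: (par v) => [p|]; first by exists v, p.
  by move: hv; rewrite (hu _ e) eqxx.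
move: hV; rewrite -cardsT (_ : [set: V] = [set r]) ?cards1 //.
by apply/setP => v; rewrite !inE; move: (hno v); rewrite negbK.
Qed.

Lemma tree_nedges_le1 : nedges par <= 1 -> exists r, par r = None /\
  ((forall v, v = r) \/ exists c, [/\ c != r, par c = Some r & forall v, v = r \/ v = c]).
Proof.
move=> hn; have [r [hr hu]] := rooted_tree_root; exists r; split => //.
case: (boolP [exists v, par v != None]) => [/existsP [c hc]|/existsPn hno]; last first.
  by left => v; apply: hu; move: (hno v); rewrite negbK => /eqP.
right; exists c.
have hc' v : par v != None -> v = c.
  by move=> hv; move: hn => /card_le1_eqP; apply; rewrite inE.
have hcr : c != r by apply: contraNneq hc => ->; rewrite hr.
case e: (par c) hc => [p|] // _.
have hp : p = r.
  apply: hu; case e2: (par p) => [q|] //.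
  by move: (hc' p); rewrite e2 => /(_ isT) hpc; subst p; case: (par_neq_self e).
subst p; split => // v.
case e3: (par v) => [q|]; last by left; apply: hu.
by right; apply: hc'; rewrite e3.
Qed.

Lemma tree_nedges_gt1 : 1 < nedges par -> exists m n1 n2, [/\ n1 != n2, adj m n1 & adj m n2].
Proof.
move=> hn; have [r [hr hu]] := rooted_tree_root.
move: hn; rewrite /nedges => /card_gt1P [a [b []]]; rewrite !inE => ha hb hab.
case ea: (par a) ha => [pa|] // _; case eb: (par b) hb => [pb|] // _.
case eq1: (par pa) => [q|].
  exists pa, a, q; split; [|exact: adj_child|exact: adj_parent].
  by apply/eqP => e; subst q; apply: (par_no_2cycle ea eq1).
case eq2: (par pb) => [q|].
  exists pb, b, q; split; [|exact: adj_child|exact: adj_parent].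
  by apply/eqP => e; subst q; apply: (par_no_2cycle eb eq2).
have e1 := hu _ eq1; have e2 := hu _ eq2; subst pa pb.
by exists r, a, b; split => //; exact: adj_child.
Qed.

End TreeShape.

Section SplitObstruction.
Variable V : finType.
Variable par : V -> option V.
Local Notation nth := (nth set0).
Local Notation Umap := (Umap par).
Local Notation adj := (adjE par (induced_edges par setT)).

Definition whole_simplex : Tsimp V := (setT, [:: setT; set0]).
Definition split_simplex (m : V) : Gsimp V :=
  (setT, induced_edges par setT, [:: [set m]; ~: [set m]]).

Lemma layering_whole : layering par setT [:: setT; set0].
Proof.
split => //; first by case=> [|[]] //= _; rewrite sub0set.
by case=> [|[]] //= _ v w; rewrite inE.
Qed.

Lemma whole_simplex_cell : XT_cell par 1 whole_simplex.
Proof.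
split => //; last exact: layering_whole.
exists [:: setT; set0]; split; first exact: layering_whole.
by exists 0, 1; split => //=; rewrite setD0.
Qed.

Lemma split_simplex_cell m : XG_cell par 2 (split_simplex m).
Proof.
split => //.
- by move=> e; rewrite !inE; case: (par e) => // p _; split => //; exists p; rewrite inE.
- move=> i j hij hj; have [-> ->] : i = 0 /\ j = 1 by lia.
  by rewrite /= disjoint_subset; apply/subsetP => v; rewrite !inE => ->.
- by rewrite !big_cons big_nil setU0 setUCr.
Qed.

Lemma split_simplex_face m : XG_face par 2 1 (split_simplex m) = Umap whole_simplex.
Proof. by rewrite XG_face_inner // Umap_pair /merge_parts /bands /band /= setD0 setUCr. Qed.

Lemma XT_cell2_layers S L : XT_cell par 2 (S, L) -> exists L1, L = [:: S; L1; set0].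
Proof.
move/XT_cellS => [_ hs [_ h0 hl _ _]].
by case: L hs h0 hl => [|a [|b [|c [|]]]] //= _ -> ->; exists b.
Qed.

Lemma XT_cell2_parent S L u w : XT_cell par 2 (S, L) -> par u = Some w -> w \in S ->
  u \in nth L 1 -> w \in nth L 1.
Proof.
move/XT_cellS => [_ hs [_ _ _ _ hlow]] hu hw hu1.
by apply: (hlow 1 _ w u hu1); [rewrite hs | exists 1; rewrite /= /parH hu hw].
Qed.

Hypothesis Htree : is_rooted_tree par.

Lemma split_simplex_no_lift_lab x' m c : XT_cell par 2 x' -> Umap x' = split_simplex m ->
  par c != Some m.
Proof.
case: x' => S L hx; have [L1 e] := XT_cell2_layers hx; subst L.
rewrite Umap_pair /split_simplex /bands /band /= setD0 => -[eS _ h1 h2]; subst S.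
apply/eqP => hc; have hcm : c != m.
  by apply/eqP => e; rewrite e in hc; apply: par_neq_self Htree _ hc.
by have := XT_cell2_parent hx hc (in_setT m); rewrite /= h2 !inE eqxx hcm => /(_ isT).
Qed.

Lemma split_simplex_no_lift_unl x' m n1 n2 psi : n1 != n2 -> adj m n1 -> adj m n2 ->
  XT_cell par 2 x' -> ~ iso_graph par (Umap x') (split_simplex m) psi.
Proof.
move=> hn hm1 hm2; case: x' => S L hx; have [L1 e] := XT_cell2_layers hx; subst L.
rewrite Umap_pair /split_simplex /bands /band /= => -[_ himg hadj _ hparts].
have h0 := hparts 0; rewrite /= in h0.
have /imsetP [m' /setDP [hm'S hm'L1] em] : m \in psi @: (S :\: L1) by rewrite h0 inE.
have hchild u : u \in S -> psi u != m -> par u != Some m'.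
  move=> hu hne; apply/eqP => hc; move/negP: hm'L1; apply.
  apply: (XT_cell2_parent hx hc hm'S); apply: contraR hne => /= hnot.
  by rewrite -in_set1 -h0; apply: imset_f; rewrite inE hnot.
have [u1 hu1 e1] : exists2 u1, u1 \in S & psi u1 = n1.
  have /imsetP [u hu ->] : n1 \in psi @: S by rewrite himg inE.
  by exists u.
have [u2 hu2 e2] : exists2 u2, u2 \in S & psi u2 = n2.
  have /imsetP [u hu ->] : n2 \in psi @: S by rewrite himg inE.
  by exists u.
have hne1 : psi u1 != m by rewrite e1; apply: contraTneq hm1 => ->; rewrite adj_irr.
have hne2 : psi u2 != m by rewrite e2; apply: contraTneq hm2 => ->; rewrite adj_irr.
have := hadj m' u1 hm'S hu1; have := hadj m' u2 hm'S hu2.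
rewrite -em e1 e2 hm1 hm2 /adjE !inE (negbTE (hchild _ hu1 hne1)) (negbTE (hchild _ hu2 hne2)).
rewrite !andbF !orbF => /andP [_ /eqP p2] /andP [_ /eqP p1].
by move: hn; rewrite -e1 -e2; rewrite p1 in p2; case: p2 => ->; rewrite eqxx.
Qed.

Lemma culf_lab_card1 : CULF (XT_lab par) (XG_lab par) Umap -> #|V| = 1.
Proof.
move=> [_ hface]; apply/eqP; apply: contraT => /(tree_card_neq1 Htree) [c [m hcm]].
have [x' [hx' _ e _]] := hface 2 1 isT whole_simplex (split_simplex m)
  whole_simplex_cell (split_simplex_cell m) (esym (split_simplex_face m)).
by have := split_simplex_no_lift_lab c hx' e; rewrite hcm eqxx.
Qed.

Lemma culf_nedges_le1 (X : ssetP (Tsimp V)) : scell X = XT_cell par ->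
  CULF X (XG_unl par) Umap -> nedges par <= 1.
Proof.
move=> hX [_ hface]; rewrite leqNgt; apply/negP => /(tree_nedges_gt1 Htree) [m [n1 [n2 [hn h1 h2]]]].
have hface_m : iso_graph par (Umap whole_simplex) (XG_face par 2 1 (split_simplex m)) id.
  by rewrite split_simplex_face; apply: iso_graph_id.
have := hface 2 1 isT whole_simplex (split_simplex m); rewrite hX.
case/(_ whole_simplex_cell (split_simplex_cell m) (ex_intro _ id hface_m)) => x' [hx' _ [psi hpsi] _].
exact: split_simplex_no_lift_unl hn h1 h2 hx' hpsi.
Qed.

End SplitObstruction.

Section SmallTrees.
Variable V : finType.
Variable par : V -> option V.
Local Notation layering := (layering par).
Local Notation nth := (nth set0).
Local Notation Umap := (Umap par).

Lemma imset_layerP S L W E P a j u : layering S L ->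
  iso_graph par (S, induced_edges par S, bands L) (W, E, P) a ->
  reflect (exists2 m, j <= m & u \in nth P m) (u \in a @: nth L j).
Proof.
move=> hL [_ _ _ _ himg]; have hl := layering_last hL.
apply: (iffP imsetP) => [[v /(mem_layerP _ _ hL) [m hm hv] ->]|[m hm]].
  by exists m => //; rewrite -himg nth_bands //; apply: imset_f.
rewrite -himg nth_bands // => /imsetP [v hv ->].
by exists v => //; apply/(mem_layerP _ _ hL); exists m.
Qed.

Lemma card_layer_iso n Sz Lz Sx Lx y a b :
  XT_cell par n.+1 (Sz, Lz) -> XT_cell par n.+1 (Sx, Lx) ->
  iso_graph par (Umap (Sz, Lz)) y a -> iso_graph par (Umap (Sx, Lx)) y b ->
  forall j, #|nth Lz j| = #|nth Lx j|.
Proof.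
case: y => [[W E] P] /XT_cellS [_ _ hLz] /XT_cellS [_ _ hLx] ha hb j.
have e : a @: nth Lz j = b @: nth Lx j.
  by apply/setP => u; apply/(imset_layerP _ _ hLz ha)/(imset_layerP _ _ hLx hb).
case: ha => ha _ _ _ _; case: hb => hb _ _ _ _.
rewrite -(card_in_imset (sub_in2 (subsetP (layer_sub j hLz)) ha)).
by rewrite -(card_in_imset (sub_in2 (subsetP (layer_sub j hLx)) hb)) e.
Qed.

Hypothesis Hloop : forall v, par v <> Some v.

Lemma iso_forest_singleton p q Lz Lx :
  layering [set p] Lz -> layering [set q] Lx -> size Lz = size Lx ->
  (forall j, #|nth Lz j| = #|nth Lx j|) ->
  iso_forest par ([set p], Lz) ([set q], Lx) (fun=> q).
Proof.
move=> hLz hLx hs hcard; split => //=.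
- by move=> u v; rewrite !inE => /eqP -> /eqP ->.
- by rewrite imset_set1.
- move=> v; rewrite inE => /eqP ->; rewrite /parH.
  have np u w : par u = Some w -> (w \in [set u]) = false.
    by move=> hu; apply/negbTE; rewrite inE; apply/eqP => e; rewrite e in hu; apply: Hloop hu.
  by case ep: (par p) => [p'|]; case eq: (par q) => [q'|] //=; rewrite ?(np _ _ ep) ?(np _ _ eq).
- move=> j; have := hcard j; have := layer_sub j hLz; have := layer_sub j hLx.
  rewrite !subset1; case/orP => /eqP ->; case/orP => /eqP ->;
    rewrite ?cards1 ?cards0 // ?imset_set1 ?imset0 //.
Qed.

Hypothesis Hcard : #|V| <= 2.
Hypothesis Hlower_card : forall A B : {set V},
  lowerH par setT A -> lowerH par setT B -> #|A| = #|B| -> A = B.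

Lemma Umap_reflects_iso_small : Umap_reflects_iso par.
Proof.
move=> [|n] z x y a b; first by move=> /= -> ->; exists id; apply: iso_forest_id.
case: z => Sz Lz; case: x => Sx Lx => hz hx ha hb.
have hcard := card_layer_iso hz hx ha hb.
move/XT_cellS: hz => [_ hsz hLz]; move/XT_cellS: hx => [_ hsx hLx].
have hS : #|Sz| = #|Sx| by case: (hLz) => _ <- _ _ _; case: (hLx) => _ <- _ _ _; apply: hcard.
have same_id : (forall j, nth Lz j = nth Lx j) -> exists phi, iso_forest par (Sz, Lz) (Sx, Lx) phi.
  move=> hj; have eL : Lz = Lx by apply: (@eq_from_nth _ set0); rewrite ?hsz ?hsx // => j _.
  by case: (hLz) (hLx) => _ <- _ _ _ [_ <- _ _ _]; rewrite eL; exists id; apply: iso_forest_id.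
have : #|Sz| <= 2 by apply: leq_trans (max_card _) Hcard.
case: (ltngtP #|Sz| 1) => hSz hSz2.
- have ez : Sz = set0 by apply: cards0_eq; lia.
  have ex : Sx = set0 by apply: cards0_eq; lia.
  apply: same_id => j; have := layer_sub j hLz; have := layer_sub j hLx.
  by rewrite ez ex !subset0 => /eqP -> /eqP ->.
- have hT (X : {set V}) : #|X| = 2 -> X = setT.
    by move=> hX; apply/eqP; rewrite eqEcard subsetT cardsT hX; apply: Hcard.
  have ez : Sz = setT by apply: hT; lia.
  have ex : Sx = setT by apply: hT; lia.
  subst Sz Sx; apply: same_id => j.
  by apply: Hlower_card; [apply: layer_lower hLz | apply: layer_lower hLx | apply: hcard].
- move/eqP/cards1P: (hSz) => [p ep]; move: hS; rewrite hSz => /esym /eqP /cards1P [q eq].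
  by subst Sz Sx; exists (fun=> q); apply: iso_forest_singleton; rewrite ?hsz ?hsx.
Qed.

End SmallTrees.

Section InnerFaceLifts.
Variable V : finType.
Variable par : V -> option V.
Local Notation nth := (nth set0).

Lemma inner_faces_lift_of_lower :
  (forall n i S L W E P psi, 0 < i < n -> XT_cell par n.-1 (S, L) -> XG_cell par n (W, E, P) ->
    iso_graph par (Umap par (S, L)) (XG_face par n i (W, E, P)) psi ->
    exists psi', iso_graph par (Umap par (S, L)) (XG_face par n i (W, E, P)) psi' /\
      lowerH par S (nth L i :|: nth (pullback_parts S psi' P n) i)) ->
  inner_faces_lift par.
Proof.
move=> hlow n i [S L] [[W E] P] psi hi hx hy hiso.
have [psi' [hiso' hM]] := hlow _ _ _ _ _ _ _ _ hi hx hy hiso.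
have [x' [hx' hf hU]] := face_lift hi hx hy hiso' hM.
by exists x'; split => //; [exists id; rewrite hf; apply: iso_forest_id | exists psi'].
Qed.

Lemma inner_faces_lift_subsingleton : (forall v w : V, v = w) -> inner_faces_lift par.
Proof.
move=> hall; apply: inner_faces_lift_of_lower => n i S L W E P psi _ _ _ hiso.
by exists psi; split => // v w hw _; rewrite (hall v w).
Qed.

Variables r c : V.
Hypothesis hr : par r = None.
Hypothesis hc : par c = Some r.
Hypothesis hcr : c != r.
Hypothesis hall : forall v, v = r \/ v = c.

Lemma card_cherry : #|V| = 2.
Proof.
rewrite -cardsT (_ : [set: V] = [set r; c]) ?cards2 1?eq_sym ?hcr //.
by apply/setP => v; rewrite !inE; case: (hall v) => ->; rewrite eqxx ?orbT.
Qed.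

Lemma leH_cherry (S : {set V}) v w : leH par S v w <-> v = w \/ [/\ v = r, w = c & r \in S].
Proof.
have hnone k : iter k (fun o => obind (parH par S) o) None = None by elim: k => //= k ->.
split => [[k]|[-> | [-> -> hS]]]; last 2 first.
- by exists 0.
- by exists 1; rewrite /= /parH hc hS.
case: k => [[->]|k]; first by left.
have hroot k' : iter k'.+1 (fun o => obind (parH par S) o) (Some r) <> Some v.
  by rewrite iterSr /= /parH hr hnone.
case: (hall w) => ->; first by move/hroot.
rewrite iterSr /= /parH hc; case: ifP => hS; last by rewrite hnone.
by case: k => [[<-]|k /hroot //]; right.
Qed.

Lemma lowerH_cherry (S M : {set V}) : ~~ [&& c \in M, r \notin M & r \in S] -> lowerH par S M.
Proof.
move=> h v w hw /leH_cherry [-> //|[ev ew hrS]]; subst v w.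
by move: h; rewrite hw hrS andbT negbK.
Qed.

Lemma lowerH_cherry_card (A B : {set V}) :
  lowerH par setT A -> lowerH par setT B -> #|A| = #|B| -> A = B.
Proof.
have hdecomp (X : {set V}) : X = (if r \in X then [set r] else set0) :|: (if c \in X then [set c] else set0).
  apply/setP => v; case: (hall v) => ->.
    by case hrX: (r \in X); case: (c \in X); rewrite !inE ?eqxx ?hrX // eq_sym (negbTE hcr).
  by case: (r \in X); case hcX: (c \in X); rewrite !inE ?eqxx ?hcX ?(negbTE hcr) ?orbF.
have hcard (X : {set V}) : #|X| = (r \in X) + (c \in X).
  rewrite {1}(hdecomp X); case: (r \in X); case: (c \in X);
    by rewrite ?setU0 ?set0U ?cards1 ?cards0 // cards2 eq_sym hcr.
have hlow (X : {set V}) : lowerH par setT X -> c \in X -> r \in X.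
  by move=> hX hcX; apply: hX hcX _; apply/leH_cherry; right; rewrite inE.
move=> hA hB; rewrite !hcard => e; rewrite (hdecomp A) (hdecomp B).
move: (hlow A hA) (hlow B hB) e.
by case: (r \in A); case: (c \in A); case: (r \in B); case: (c \in B) => //= hA' hB';
  first [move: (hA' isT) | move: (hB' isT)].
Qed.

Definition swap_cherry (v : V) := if v == r then c else r.

Lemma swap_cherryK : involutive swap_cherry.
Proof. by move=> v; rewrite /swap_cherry; case: (hall v) => ->; rewrite ?eqxx ?(negbTE hcr) ?eqxx. Qed.

Lemma imset_swap_cherry (X : {set V}) : (r \in X) = (c \in X) -> swap_cherry @: X = X.
Proof.
move=> e; have hsw v : (swap_cherry v \in X) = (v \in X).
  by rewrite /swap_cherry; case: (hall v) => ->; rewrite ?eqxx ?(negbTE hcr).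
apply/setP => v; apply/imsetP/idP => [[u hu ->]|hv]; first by rewrite hsw.
by exists (swap_cherry v); rewrite ?swap_cherryK // hsw.
Qed.

Lemma adj_swap_cherry u v :
  adjE par (induced_edges par setT) (swap_cherry u) (swap_cherry v) =
  adjE par (induced_edges par setT) u v.
Proof.
have hrr : adjE par (induced_edges par setT) r r = false by rewrite /adjE hr /= andbF.
have hcc : adjE par (induced_edges par setT) c c = false.
  by rewrite /adjE hc; case: eqP => [[e]|]; [move: hcr; rewrite e eqxx | rewrite andbF].
rewrite /swap_cherry; case: (hall u) => ->; case: (hall v) => ->;
  by rewrite ?eqxx ?(negbTE hcr) ?hrr ?hcc // /adjE orbC.
Qed.

Lemma iso_graph_swap_cherry L y psi : layering par setT L ->
  (forall k, (r \in nth L k) = (c \in nth L k)) ->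
  iso_graph par (Umap par (setT, L)) y psi -> iso_graph par (Umap par (setT, L)) y (psi \o swap_cherry).
Proof.
case: y => [[W E] Q] hL hrc; rewrite Umap_pair => -[hinj himg hadj hs himgk]; split => //.
- move=> u v _ _ /= e; apply: (can_inj swap_cherryK).
  by apply: hinj; rewrite ?inE.
- by rewrite imset_comp imset_swap_cherry ?inE.
- by move=> u v _ _; rewrite -adj_swap_cherry hadj ?inE.
- move=> k; rewrite -himgk imset_comp nth_bands ?(layering_last hL) //.
  by rewrite imset_swap_cherry // /band !inE !hrc.
Qed.

Lemma inner_faces_lift_cherry : inner_faces_lift par.
Proof.
apply: inner_faces_lift_of_lower => n i S L W E P psi hi hx hy hiso.
set M := nth L i :|: nth (pullback_parts S psi P n) i.
case: (boolP [&& c \in M, r \notin M & r \in S]) => hb; last first.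
  by exists psi; split => //; apply: lowerH_cherry.
have [hL _ hb_merge _ _] := face_pullback hi hx hy hiso.
set A := pullback_parts S psi P n in M hb hb_merge.
have hsP : size P = n by case: hy.
have hA k : nth A k = S :&: psi @^-1: nth P k by apply: nth_pullback_parts.
move/and3P: hb => [hcM]; rewrite inE negb_or => /andP [hrLi hrAi] hrS.
have [hi1 hi2] := andP hi; have hl := layering_last hL.
have hleH X : lowerH par S X -> c \in X -> r \in X.
  by move=> hX hcX; apply: hX hcX _; apply/leH_cherry; right.
have hcLi : c \notin nth L i by apply: contra hrLi; apply/hleH/layer_lower.
have hbi : band L i.-1 = nth A i.-1 :|: nth A i.
  by rewrite -nth_bands // hb_merge nth_merge_parts ?size_map ?size_iota ?ltnn ?eqxx //; lia.
have hcL1 : c \in nth L i.-1.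
  move: hcM; rewrite inE (negbTE hcLi) /= => hcA.
  have : c \in band L i.-1 by rewrite hbi inE hcA orbT.
  by rewrite inE => /andP [].
have hrL1 : r \in nth L i.-1 by apply/hleH/layer_lower: hcL1.
have hrc k : (r \in nth L k) = (c \in nth L k).
  case: (leqP k i.-1) => hk.
    by rewrite (subsetP (layer_subset hL hk) _ hrL1) (subsetP (layer_subset hL hk) _ hcL1).
  have /subsetP hsub : nth L k \subset nth L i by apply: layer_subset hL _; lia.
  by apply/idP/idP => /hsub; rewrite ?(negbTE hrLi) ?(negbTE hcLi).
have hST : S = setT.
  apply/setP => v; rewrite inE; case: (hall v) => -> //.
  exact: subsetP (layer_sub i.-1 hL) _ hcL1.
subst S; exists (psi \o swap_cherry); split; first exact: iso_graph_swap_cherry.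
apply: lowerH_cherry; apply/negP => /and3P [+ _ _].
rewrite !inE (negbTE hcLi) nth_pullback_parts // !inE /= /swap_cherry (negbTE hcr).
by move: hrAi; rewrite hA !inE => /negP.
Qed.

End InnerFaceLifts.

Section SmallTreesCULF.
Variable V : finType.
Variable par : V -> option V.
Hypothesis Htree : is_rooted_tree par.

Lemma culf_unl_subsingleton : (forall v w : V, v = w) -> CULF (XT_unl par) (XG_unl par) (Umap par).
Proof.
move=> hall; apply: culf_unl; last exact: inner_faces_lift_subsingleton.
have hcard : #|V| <= 2 by apply: (@leq_trans 1) => //; apply/fintype_le1P => v w; apply: hall.
apply: Umap_reflects_iso_small (par_neq_self Htree) hcard _ => A B _ _ hAB. have [A0|[a ha]] := set_0Vmem A.
  by rewrite A0 cards0 in hAB *; apply/esym/cards0_eq.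
have [b hb] : exists b, b \in B by apply/set0Pn; rewrite -card_gt0 -hAB card_gt0; apply/set0Pn; exists a.
by apply/setP => v; rewrite (hall v a) ha (hall a b) hb.
Qed.

Lemma culf_unl_cherry r c : par r = None -> par c = Some r -> c != r ->
  (forall v, v = r \/ v = c) -> CULF (XT_unl par) (XG_unl par) (Umap par).
Proof.
move=> hr hc hcr hall; apply: culf_unl; last exact: inner_faces_lift_cherry hr hc hcr hall.
apply: Umap_reflects_iso_small (par_neq_self Htree) _ (lowerH_cherry_card hr hc hcr hall).
by rewrite (card_cherry hcr hall).
Qed.

Lemma culf_unl_nedges_le1 : nedges par <= 1 -> CULF (XT_unl par) (XG_unl par) (Umap par).
Proof.
move=> hn; have [r [hr [hall|[c [hcr hc hall]]]]] := tree_nedges_le1 Htree hn.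
  by apply: culf_unl_subsingleton => v w; rewrite (hall v) (hall w).
exact: culf_unl_cherry hr hc hcr hall.
Qed.

End SmallTreesCULF.

Lemma parH_some (V : finType) (par : V -> option V) (S : {set V}) u w :
  parH par S u = Some w -> par u = Some w.
Proof. by rewrite /parH; case: (par u) => // p; case: ifP => // _ [->]. Qed.

(* A planar structure only orders siblings, so it is vacuous when no vertex has two children. *)
Lemma XT_pl_unl (V : finType) (par : V -> option V) po : planar_structure par po ->
  (forall c1 c2 v, par c1 = Some v -> par c2 = Some v -> c1 = c2) ->
  XT_pl par po = XT_unl par.
Proof.
move=> hpl huniq; rewrite /XT_pl /XT_unl; congr SSetP.
apply: functional_extensionality => n; apply: functional_extensionality => x.
apply: functional_extensionality => y; apply: propositional_extensionality.
split=> [[phi [h _]]|[phi h]]; first by exists phi.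
exists phi; split => // v c1 c2 hv hc1 hc2 e1 e2.
have p1 := parH_some e1; rewrite -(huniq _ _ _ p1 (parH_some e2)).
have [_ _ hpar _ _] := h.
have p1' : par (phi c1) = Some (phi v) by apply: (@parH_some _ _ y.1); rewrite hpar // e1.
by have [+ _ _] := hpl v; have [+ _ _] := hpl (phi v) => /(_ _ p1') /negbTE -> /(_ _ p1) /negbTE ->.
Qed.

Lemma nedges_le1_par_inj (V : finType) (par : V -> option V) : nedges par <= 1 ->
  forall c1 c2 v, par c1 = Some v -> par c2 = Some v -> c1 = c2.
Proof. by move=> /card_le1_eqP hn c1 c2 v h1 h2; apply: hn; rewrite inE ?h1 ?h2. Qed.

Theorem mainTheorem6 (V : finType) (par : V -> option V) :
  is_rooted_tree par ->
  (CULF (XT_lab par) (XG_lab par) (Umap par) <-> #|V| = 1) /\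
  (CULF (XT_unl par) (XG_unl par) (Umap par) <-> nedges par <= 1) /\
  (forall po : V -> rel V, planar_structure par po ->
     (CULF (XT_pl par po) (XG_unl par) (Umap par) <-> nedges par <= 1)).
Proof.
move=> Htree; split; [|split].
- split; first exact: culf_lab_card1.
  move=> hV; apply: culf_lab_subsingleton => v w.
  by move/eqP: hV; rewrite eqn_leq => /andP [/fintype_le1P h _]; rewrite (h v w).
- by split; [apply: culf_nedges_le1 | apply: culf_unl_nedges_le1].
- move=> po hpl; split; first exact: culf_nedges_le1.
  move=> hn; rewrite (XT_pl_unl hpl (nedges_le1_par_inj hn)).
  exact: culf_unl_nedges_le1.
Qed.
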